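(* Let $k$ be an even positive integer and $m\geq 1$ an integer. Let $G$ be a connected graph whose complement $\overline{G}$ is isomorphic to the disjoint union of $\frac{k}{2}$ copies of the path $P_5$ (on 5 vertices) and $m$ isolated vertices. Then $G$ has exactly $k$ basis forced vertices and $\dim(G)=k+m-1$.
   Context: All graphs are finite and simple. $\overline{G}$ denotes the complement graph. For vertices $u,v$ of a connected graph $G$, $d(u,v)$ is the length of a shortest $u$–$v$ path. A set $R\subseteq V(G)$ is a resolving set if for all distinct $x,y\in V(G)$ there is $r\in R$ with $d(r,x)\neq d(r,y)$. The metric dimension $\dim(G)$ is the minimum cardinality of a resolving set, and a resolving set of cardinality $\dim(G)$ is a metric basis. A vertex is a basis forced vertex if it belongs to every metric basis of $G$. *)

From mathcomp Require Import all_boot.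
Set Implicit Arguments. Unset Strict Implicit. Unset Printing Implicit Defensive.

Section Graphs.
Variable T : finType.
Implicit Types (e : rel T) (x y : T) (R : {set T}).

Definition simple_graph e := symmetric e /\ irreflexive e.

Definition compl_graph e : rel T := fun x y => (x != y) && ~~ e x y.

Definition connected_graph e := forall x y, connect e x y.

Definition walk_of_len e n x y : bool :=
  [exists p : n.-tuple T, path e x p && (last x p == y)].

(* d(x,y): least n such that an x-y walk of length n exists
   (for connected graphs such n exists and is < #|T|) *)
Definition dist e x y : nat :=
  find (fun n => walk_of_len e n x y) (iota 0 #|T|).

Definition resolving e R : bool :=
  [forall x, forall y, (x != y) ==> [exists r in R, dist e r x != dist e r y]].

Definition metric_dim e : nat :=
  #|[arg min_(R < [set: T] | resolving e R) #|R|]|.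

Definition metric_basis e R : bool :=
  resolving e R && (#|R| == metric_dim e).

Definition basis_forced_set e : {set T} :=
  [set v | [forall R : {set T}, metric_basis e R ==> (v \in R)]].

End Graphs.

Definition P5s_iso_type (p m : nat) : finType := (('I_p * 'I_5) + 'I_m)%type.

Definition P5s_iso_rel (p m : nat) : rel (P5s_iso_type p m) :=
  fun u v => match u, v with
  | inl (i, a), inl (j, b) =>
      (i == j) && (((nat_of_ord a).+1 == b) || ((nat_of_ord b).+1 == a))
  | _, _ => false
  end.

Arguments P5s_iso_rel : clear implicits.

Definition graph_iso (T U : finType) (e : rel T) (e' : rel U) : Prop :=
  exists f : T -> U, bijective f /\ forall x y, e x y = e' (f x) (f y).

From mathcomp Require Import all_boot zify.
Set Implicit Arguments. Unset Strict Implicit. Unset Printing Implicit Defensive.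

(* An isolated vertex of the complement is adjacent in G to all other
   vertices, so distances in G are 0, 1 or 2 according as two vertices are equal,
   non-adjacent or adjacent in the complement. Hence S resolves G iff any two vertices
   outside S are told apart by complement-adjacency to some vertex of S. Then S meets every
   copy of P_5 in at least two vertices (no single vertex of P_5 resolves the others) and
   contains all isolated vertices but at most one, so dim G >= 2p + m - 1. In a set of that
   size each copy holds exactly two vertices and some isolated vertex is missed; that vertex
   must be distinguished from the remaining vertices of each copy, so the two vertices
   also dominate the copy, and {2nd, 4th} is the only such pair. Conversely these 2p
   vertices plus all isolated vertices but any one resolve G, so exactly those 2p = k
   vertices are forced. *)

Section Distances.
Variable T : finType.
Implicit Types (e : rel T) (x y : T) (R : {set T}).

Lemma walk_of_len0 e x y : walk_of_len e 0 x y = (x == y).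
Proof.
apply/existsP/idP => [[s]|/eqP <-]; last by exists [tuple]; rewrite /= eqxx.
by rewrite (tuple0 s).
Qed.

Lemma walk_of_len1 e x y : walk_of_len e 1 x y = e x y.
Proof.
apply/existsP/idP => [[s]|exy]; last by exists [tuple y]; rewrite /= exy eqxx.
by case/tupleP: s => z s; rewrite (tuple0 s) /= andbT => /andP [exz /eqP <-].
Qed.

Lemma walk_of_len2 e x y z : e x z -> e z y -> walk_of_len e 2 x y.
Proof. by move=> exz ezy; apply/existsP; exists [tuple z; y]; rewrite /= exz ezy eqxx. Qed.

Lemma dist_eq0 e x y : (dist e x y == 0) = (x == y).
Proof.
have : 0 < #|T| by apply/card_gt0P; exists x.
by rewrite /dist; case: #|T| => // n _ /=; rewrite walk_of_len0; case: (x == y).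
Qed.

Lemma resolvingP e R :
  reflect (forall x y, x != y -> exists2 r, r \in R & dist e r x != dist e r y)
          (resolving e R).
Proof.
apply: (iffP forallP) => [resR x y nxy | resR x].
  exact/exists_inP/(implyP (forallP (resR x) y)).
by apply/forallP => y; apply/implyP => /resR /exists_inP.
Qed.

Lemma resolving_setT e : resolving e [set: T].
Proof.
apply/resolvingP => x y nxy; exists x; rewrite ?inE //.
have /eqP -> : dist e x x == 0 by rewrite dist_eq0.
by rewrite eq_sym dist_eq0.
Qed.

Lemma metric_dim_min e R : resolving e R -> metric_dim e <= #|R|.
Proof.
by rewrite /metric_dim; case: arg_minnP => [|R0 _]; [exact: resolving_setT | apply].
Qed.

Lemma metric_basis_exists e : exists R, metric_basis e R.
Proof.
rewrite /metric_basis /metric_dim.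
case: arg_minnP => [|R0 resR0 _]; first exact: resolving_setT.
by exists R0; rewrite resR0 /=.
Qed.

Lemma metric_dimE e d R0 :
  resolving e R0 -> #|R0| = d -> (forall R, resolving e R -> d <= #|R|) ->
  metric_dim e = d.
Proof.
move=> resR0 <- minR0; apply/eqP; rewrite eqn_leq metric_dim_min //=.
by have [R /andP [resR /eqP <-]] := metric_basis_exists e; apply: minR0.
Qed.

Lemma dist_dominating e u x y :
  symmetric e -> irreflexive e -> (forall v, v != u -> e u v) ->
  dist e x y = if x == y then 0 else if e x y then 1 else 2.
Proof.
move=> e_sym e_irr u_dom.
have [<-|nxy] := eqVneq x y; first by apply/eqP; rewrite dist_eq0.
have T_gt1 : 1 < #|T| by apply/card_gt1P; exists x, y.
case: ifP => exy.
  by rewrite /dist; move: T_gt1; case: #|T| => [|[|n]] //= _;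
     rewrite walk_of_len0 walk_of_len1 (negbTE nxy) exy.
have xu : x != u by apply: contraFneq exy => xu; rewrite xu u_dom // -xu eq_sym.
have yu : y != u by apply: contraFneq exy => ->; rewrite e_sym u_dom.
have T_gt2 : 2 < #|T| by apply/card_gt2P; exists x, y, u; rewrite !inE nxy yu eq_sym xu.
rewrite /dist; move: T_gt2; case: #|T| => [|[|[|n]]] //= _.
by rewrite walk_of_len0 walk_of_len1 (negbTE nxy) exy (@walk_of_len2 _ _ _ u)
   ?u_dom // e_sym u_dom.
Qed.

End Distances.

Section Isomorphism.
Variables (T U : finType) (e : rel T) (e' : rel U) (f : T -> U).
Hypotheses (f_bij : bijective f) (f_hom : forall x y, e x y = e' (f x) (f y)).

Lemma path_hom x s : path e x s = path e' (f x) (map f s).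
Proof. by elim: s x => //= y s IHs x; rewrite f_hom IHs. Qed.

Lemma walk_of_len_iso n x y : walk_of_len e n x y = walk_of_len e' n (f x) (f y).
Proof.
have [g fK gK] := f_bij.
apply/existsP/existsP => [[s /andP [es /eqP <-]] | [s /andP [es /eqP exy]]].
  by exists (map_tuple f s); rewrite /= -path_hom es last_map eqxx.
exists (map_tuple g s); rewrite /= path_hom -map_comp (eq_map gK) map_id es /=.
by rewrite -{1}[x]fK last_map exy fK.
Qed.

Lemma dist_iso x y : dist e x y = dist e' (f x) (f y).
Proof.
by rewrite /dist (bij_eq_card f_bij); apply: eq_find => n; apply: walk_of_len_iso.
Qed.

Lemma resolving_iso R : resolving e R = resolving e' (f @: R).
Proof.
have [g fK gK] := f_bij.
apply/resolvingP/resolvingP => resR x y nxy.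
  have [|r rR] := resR (g x) (g y); first by rewrite (can_eq gK).
  by rewrite !dist_iso !gK; exists (f r); rewrite ?imset_f.
have [|_ /imsetP [r rR ->]] := resR (f x) (f y); first by rewrite (can_eq fK).
by rewrite -!dist_iso; exists r.
Qed.

End Isomorphism.

Section IsomorphismInvariance.
Variables (T U : finType) (e : rel T) (e' : rel U).

Lemma graph_iso_sym : graph_iso e e' -> graph_iso e' e.
Proof.
case=> f [[g fK gK] f_hom]; exists g; split; first exact: (Bijective gK fK).
by move=> x y; rewrite f_hom !gK.
Qed.

Lemma metric_dim_iso_le : graph_iso e e' -> metric_dim e' <= metric_dim e.
Proof.
case=> f [f_bij f_hom]; have [R /andP [resR /eqP <-]] := metric_basis_exists e.
rewrite -(card_imset _ (bij_inj f_bij)).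
by apply: metric_dim_min; rewrite -(resolving_iso f_bij f_hom).
Qed.

End IsomorphismInvariance.

Lemma metric_dim_iso (T U : finType) (e : rel T) (e' : rel U) :
  graph_iso e e' -> metric_dim e = metric_dim e'.
Proof.
move=> iso; apply/eqP; rewrite eqn_leq (metric_dim_iso_le iso) andbT.
exact/metric_dim_iso_le/graph_iso_sym.
Qed.

Lemma card_basis_forced_iso (T U : finType) (e : rel T) (e' : rel U) :
  graph_iso e e' -> #|basis_forced_set e| = #|basis_forced_set e'|.
Proof.
move=> iso; have dim_iso := metric_dim_iso iso.
case: iso => f [f_bij f_hom]; have [g fK gK] := f_bij.
have basis_iso R : metric_basis e R = metric_basis e' (f @: R).
  by rewrite /metric_basis (resolving_iso f_bij f_hom) (card_imset _ (can_inj fK)) dim_iso.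
suff -> : basis_forced_set e' = f @: basis_forced_set e.
  by rewrite (card_imset _ (can_inj fK)).
apply/setP => u; rewrite -[u]gK (mem_imset _ _ (can_inj fK)) !inE.
apply/forallP/forallP => forced R; apply/implyP.
  by rewrite basis_iso => /(implyP (forced _)); rewrite (mem_imset _ _ (can_inj fK)).
move=> basisR; have := implyP (forced (g @: R)).
rewrite basis_iso -imset_comp (eq_imset _ gK) imset_id gK => /(_ basisR).
by rewrite (mem_imset _ _ (can_inj gK)).
Qed.

Lemma graph_iso_compl (T U : finType) (e : rel T) (e' : rel U) :
  irreflexive e -> graph_iso (compl_graph e) e' -> graph_iso e (compl_graph e').
Proof.
move=> e_irr [f [f_bij f_hom]]; exists f; split=> // x y.
rewrite /compl_graph -f_hom (inj_eq (bij_inj f_bij)) /compl_graph.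
by have [<-|] := eqVneq x y; rewrite ?e_irr ?negbK.
Qed.

Lemma all_iotaP (P : pred nat) n : reflect (forall x : 'I_n, P x) (all P (iota 0 n)).
Proof.
apply: (iffP allP) => [Ps x | Ps x]; first by apply: Ps; rewrite mem_iota add0n ltn_ord.
by rewrite mem_iota => /andP [_ x_lt_n]; apply: (Ps (Ordinal x_lt_n)).
Qed.

(* The vertices of P_5 are numbered 0, ..., 4 along the path, so [p5_13] consists of
   its second and fourth vertices. *)
Definition p5_adj (a b : nat) : bool := (a.+1 == b) || (b.+1 == a).

Definition p5_resolving (C : {set 'I_5}) : Prop :=
  forall a b : 'I_5, a != b -> a \notin C -> b \notin C ->
  exists2 c, c \in C & p5_adj c a != p5_adj c b.

Definition p5_dominating (C : {set 'I_5}) : Prop :=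
  forall a : 'I_5, a \notin C -> exists2 c, c \in C & p5_adj c a.

Definition p5_13 : {set 'I_5} := [set Ordinal (isT : 1 < 5); Ordinal (isT : 3 < 5)].

(* Versions of [p5_resolving] and [p5_dominating] for a pair that are decided by
   evaluation: they range over [iota 0 5] since enumerations of ['I_5] do not reduce. *)
Definition p5_pair_resolvingb (a b : nat) : bool :=
  all (fun x => all (fun y =>
    [==> x != y, x \notin [:: a; b], y \notin [:: a; b] =>
         (p5_adj a x != p5_adj a y) || (p5_adj b x != p5_adj b y)])
    (iota 0 5)) (iota 0 5).

Definition p5_pair_dominatingb (a b : nat) : bool :=
  all (fun x => (x \notin [:: a; b]) ==> p5_adj a x || p5_adj b x) (iota 0 5).

Lemma p5_pair_resolvingP (a b : 'I_5) :
  reflect (p5_resolving [set a; b]) (p5_pair_resolvingb a b).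
Proof.
apply: (iffP (all_iotaP _ _)) => [resb x y nxy | res x].
  rewrite !in_set2 => xC yC; move: (resb x) => /all_iotaP /(_ y).
  rewrite !inE !(inj_eq (@ord_inj _)) nxy xC yC /= => /orP [sep | sep].
    by exists a; rewrite ?in_set2 ?eqxx.
  by exists b; rewrite ?in_set2 ?eqxx ?orbT.
apply/all_iotaP => y; rewrite !inE !(inj_eq (@ord_inj _)).
apply/implyP => nxy; apply/implyP => xC; apply/implyP => yC.
have [||c] := res x y nxy; rewrite ?in_set2 //.
by case/orP => /eqP -> ->; rewrite ?orbT.
Qed.

Lemma p5_pair_dominatingP (a b : 'I_5) :
  reflect (p5_dominating [set a; b]) (p5_pair_dominatingb a b).
Proof.
apply: (iffP (all_iotaP _ _)) => [domb x | dom x].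
  rewrite in_set2 => xC; move: (domb x); rewrite !inE !(inj_eq (@ord_inj _)) xC /=.
  by case/orP => adj; [exists a | exists b]; rewrite ?in_set2 ?eqxx ?orbT.
rewrite !inE !(inj_eq (@ord_inj _)); apply/implyP => xC.
have [|c] := dom x; first by rewrite in_set2.
by rewrite in_set2 => /orP [] /eqP -> ->; rewrite ?orbT.
Qed.

Lemma p5_resolvingS (C D : {set 'I_5}) : C \subset D -> p5_resolving C -> p5_resolving D.
Proof.
move=> /subsetP CD resC a b nab aD bD.
have [||c cC sep] := resC a b nab; [exact: contra (CD a) aD | exact: contra (CD b) bD |].
by exists c; rewrite ?CD.
Qed.

Lemma p5_resolving_card (C : {set 'I_5}) : p5_resolving C -> 1 < #|C|.
Proof.
move=> resC; rewrite ltnNge; apply/negP => C_le1.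
have [c Cc] : exists c, C \subset [set c; c].
  have [->|[c cC]] := set_0Vmem C; first by exists ord0; rewrite sub0set.
  by exists c; apply/subsetP => x xC; rewrite setUid inE (card_le1_eqP C_le1 x c xC cC).
have /all_iotaP /(_ c) := isT : all (fun c => ~~ p5_pair_resolvingb c c) (iota 0 5).
by move/p5_pair_resolvingP; apply; apply: p5_resolvingS resC.
Qed.

Lemma p5_resolving_dominating_pair (C : {set 'I_5}) :
  #|C| = 2 -> p5_resolving C -> p5_dominating C -> C = p5_13.
Proof.
move=> /eqP /cards2P [a [b [nab ->]]] /p5_pair_resolvingP res /p5_pair_dominatingP dom.
have /all_iotaP /(_ a) /all_iotaP /(_ b) := isT : all (fun a => all (fun b =>
  [==> a != b, p5_pair_resolvingb a b, p5_pair_dominatingb a b =>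
       [:: a; b] \in [:: [:: 1; 3]; [:: 3; 1]]]) (iota 0 5)) (iota 0 5).
rewrite (inj_eq (@ord_inj _)) nab res dom !inE !eqseq_cons !andbT /=.
case/orP => /andP [/eqP a_eq /eqP b_eq]; last rewrite setUC.
  by congr [set _; _]; apply: ord_inj.
by congr [set _; _]; apply: ord_inj.
Qed.

Lemma p5_13_resolving : p5_resolving p5_13.
Proof. exact/p5_pair_resolvingP. Qed.

Lemma p5_13_dominating : p5_dominating p5_13.
Proof. exact/p5_pair_dominatingP. Qed.

Section ComplementOfPaths.
Variables p m : nat.
Hypothesis m_gt0 : 0 < m.
Local Notation U := (P5s_iso_type p m).
Local Notation adjU := (P5s_iso_rel p m).
Local Notation G := (compl_graph adjU).
Implicit Types (S : {set U}) (x y r : U).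

Lemma P5s_iso_rel_inl i j (a b : 'I_5) :
  adjU (inl (i, a)) (inl (j, b)) = (i == j) && p5_adj a b.
Proof. by []. Qed.

Lemma P5s_iso_rel_inr x j : adjU x (inr j) = false.
Proof. by case: x => [[]|]. Qed.

Lemma P5s_iso_rel_sym : symmetric adjU.
Proof. by move=> [[i a]|?] [[j b]|?] //=; rewrite eq_sym /p5_adj orbC. Qed.

Lemma dist_P5s_compl r x :
  dist G r x = if r == x then 0 else if adjU r x then 2 else 1.
Proof.
have G_sym : symmetric G by move=> y z; rewrite /compl_graph eq_sym P5s_iso_rel_sym.
have G_irr : irreflexive G by move=> y; rewrite /compl_graph eqxx.
have G_dom v : v != inr (Ordinal m_gt0) -> G (inr (Ordinal m_gt0)) v.
  by rewrite /compl_graph eq_sym => ->.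
rewrite (dist_dominating _ _ G_sym G_irr G_dom) /compl_graph.
by case: eqP => //= _; case: adjU.
Qed.

Lemma resolving_P5s_complP S :
  reflect (forall x y, x != y -> x \notin S -> y \notin S ->
             exists2 r, r \in S & adjU r x != adjU r y)
          (resolving G S).
Proof.
apply: (iffP (resolvingP _ _)) => resS x y nxy.
  move=> xS yS; have [r rS sep] := resS x y nxy; exists r => //.
  have rx : r != x by apply: contraNneq xS => <-.
  have ry : r != y by apply: contraNneq yS => <-.
  by move: sep; rewrite !dist_P5s_compl (negbTE rx) (negbTE ry); do 2!case: adjU.
have [xS|xS] := boolP (x \in S).
  by exists x; rewrite // !dist_P5s_compl eqxx (negbTE nxy); case: adjU.
have [yS|yS] := boolP (y \in S).
  by exists y; rewrite // !dist_P5s_compl eqxx [y == x]eq_sym (negbTE nxy); case: adjU.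
have [r rS sep] := resS x y nxy xS yS; exists r => //.
have rx : r != x by apply: contraNneq xS => <-.
have ry : r != y by apply: contraNneq yS => <-.
by move: sep; rewrite !dist_P5s_compl (negbTE rx) (negbTE ry); do 2!case: adjU.
Qed.

Definition copy_part S (i : 'I_p) : {set 'I_5} := [set a | inl (i, a) \in S].

Definition isolated_part S : {set 'I_m} := [set j | inr j \in S].

Lemma card_parts S : #|S| = \sum_(i < p) #|copy_part S i| + #|isolated_part S|.
Proof.
rewrite -sum1_card big_mkcond big_sumType /=; congr (_ + _).
  rewrite (eq_bigr (fun i => \sum_(a < 5) if inl (i, a) \in S then 1 else 0)).
    by rewrite pair_big; apply: congr_big => // -[].
  by move=> i _; rewrite -sum1_card big_mkcond; apply: eq_bigr => a _; rewrite inE.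
by rewrite -sum1_card [RHS]big_mkcond; apply: eq_bigr => j _; rewrite inE.
Qed.

Lemma copy_part_resolving S i : resolving G S -> p5_resolving (copy_part S i).
Proof.
move=> /resolving_P5s_complP resS a b nab; rewrite !inE => aS bS.
have [|[[i' c]|//] cS] := resS _ _ _ aS bS; first by apply: contra nab => /eqP [->].
rewrite !P5s_iso_rel_inl; case: (i' =P i) cS => [-> cS sep | _ _ //=].
by exists c; rewrite ?inE.
Qed.

Lemma copy_part_dominating S i j :
  resolving G S -> inr j \notin S -> p5_dominating (copy_part S i).
Proof.
move=> /resolving_P5s_complP resS jS a; rewrite inE => aS.
have [//|[[i' c]|//] cS] := resS _ _ _ aS jS.
rewrite P5s_iso_rel_inl P5s_iso_rel_inr; case: (i' =P i) cS => [-> cS | _ _ //=].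
by rewrite eqbF_neg negbK => adj; exists c; rewrite ?inE.
Qed.

Lemma isolated_part_card S : resolving G S -> m - 1 <= #|isolated_part S|.
Proof.
move=> /resolving_P5s_complP resS.
have : #|~: isolated_part S| <= 1.
  apply/card_le1_eqP => j j'; rewrite !inE => jS j'S; case: (eqVneq j j') => // njj'.
  have [|r _] := resS _ _ _ jS j'S; first by apply: contra njj' => /eqP [->].
  by rewrite !P5s_iso_rel_inr.
by have := cardsC (isolated_part S); rewrite card_ord; lia.
Qed.

Lemma sum_card_copy_parts_p5_13 S :
  (forall i, copy_part S i = p5_13) -> \sum_(i < p) #|copy_part S i| = p.*2.
Proof.
move=> copyS; rewrite (eq_bigr (fun=> 2)) ?sum_nat_const ?card_ord ?muln2 // => i _.
by rewrite copyS cards2.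
Qed.

Lemma resolving_card S : resolving G S -> p.*2 + (m - 1) <= #|S|.
Proof.
move=> resS; rewrite card_parts leq_add ?isolated_part_card //.
have -> : p.*2 = \sum_(i < p) 2 by rewrite sum_nat_const card_ord muln2.
rewrite leq_sum // => i _.
exact/p5_resolving_card/copy_part_resolving.
Qed.

Lemma min_resolving_copy_part S :
  resolving G S -> #|S| = p.*2 + (m - 1) -> forall i, copy_part S i = p5_13.
Proof.
move=> resS cardS i.
have copy_gt1 i' : 1 < #|copy_part S i'|.
  exact/p5_resolving_card/copy_part_resolving.
have sum_copy : \sum_(i' < p) #|copy_part S i'| =
                \sum_(i' < p) (#|copy_part S i'| - 2) + p.*2.
  have -> : p.*2 = \sum_(i' < p) 2 by rewrite sum_nat_const card_ord muln2.
  rewrite -big_split /=.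
  by apply: eq_bigr => i' _; rewrite subnK.
have iso_ge := isolated_part_card resS.
have [/eqP excess0 iso_eq] :
    \sum_(i' < p) (#|copy_part S i'| - 2) = 0 /\ #|isolated_part S| = m - 1.
  by move: cardS; rewrite card_parts sum_copy; lia.
move: excess0; rewrite sum_nat_eq0 => /forallP /(_ i) /=; rewrite subn_eq0 => copy_le2.
have /card_gt0P [j] : 0 < #|~: isolated_part S|.
  by have := cardsC (isolated_part S); rewrite card_ord; lia.
rewrite !inE => jS.
apply: p5_resolving_dominating_pair; last exact: copy_part_dominating jS.
  by apply/eqP; rewrite eqn_leq copy_le2 copy_gt1.
exact: copy_part_resolving.
Qed.

Definition landmarks (j : 'I_m) : {set U} :=
  [set x | match x with inl (_, a) => a \in p5_13 | inr j' => j' != j end].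

Definition forced_vertices : {set U} :=
  [set x | match x with inl (_, a) => a \in p5_13 | inr _ => false end].

Lemma card_landmarks j : #|landmarks j| = p.*2 + (m - 1).
Proof.
rewrite card_parts sum_card_copy_parts_p5_13 => [|i]; last by apply/setP => a; rewrite !inE.
have -> : isolated_part (landmarks j) = [set~ j] by apply/setP => j'; rewrite !inE.
by rewrite cardsC1 card_ord subn1.
Qed.

Lemma card_forced_vertices : #|forced_vertices| = p.*2.
Proof.
rewrite card_parts sum_card_copy_parts_p5_13 => [|i]; last by apply/setP => a; rewrite !inE.
have -> : isolated_part forced_vertices = set0 by apply/setP => j; rewrite !inE.
by rewrite cards0 addn0.
Qed.

Lemma resolving_landmarks j : resolving G (landmarks j).
Proof.
apply/resolving_P5s_complP.
have dominated (i : 'I_p) (a : 'I_5) z : inl (i, a) \notin landmarks j ->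
    (forall c : 'I_5, adjU (inl (i, c)) z = false) ->
    exists2 r, r \in landmarks j & adjU r (inl (i, a)) != adjU r z.
  rewrite inE => a13 z_far; have [c c13 adj] := p5_13_dominating a13.
  by exists (inl (i, c)); [rewrite inE | rewrite z_far P5s_iso_rel_inl eqxx adj].
move=> [[i a]|j1] [[i' b]|j2] nxy xL yL.
- case: (eqVneq i i') nxy yL => [<- nxy yL | ni _ _]; last first.
    by apply: dominated => // c; rewrite P5s_iso_rel_inl (negbTE ni).
  have nab : a != b by apply: contraNneq nxy => ->.
  rewrite inE in xL; rewrite inE in yL; have [c c13 sep] := p5_13_resolving nab xL yL.
  by exists (inl (i, c)); [rewrite inE | rewrite !P5s_iso_rel_inl eqxx].
- by apply: dominated => // c; rewrite P5s_iso_rel_inr.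
- have [r rL sep] := dominated i' b (inr j1) yL (fun c => P5s_iso_rel_inr _ _).
  by exists r; rewrite // eq_sym.
- by move: xL yL nxy; rewrite !inE !negbK => /eqP -> /eqP ->; rewrite eqxx.
Qed.

Lemma metric_dim_P5s_compl : metric_dim G = p.*2 + (m - 1).
Proof.
exact: metric_dimE (resolving_landmarks (Ordinal m_gt0)) (card_landmarks _) resolving_card.
Qed.

Lemma basis_forced_set_P5s_compl : basis_forced_set G = forced_vertices.
Proof.
apply/setP => v; rewrite !inE; apply/forallP/idP => [forced | v_forced R].
  pose j := if v is inr j' then j' else Ordinal m_gt0.
  have := implyP (forced (landmarks j)).
  rewrite /metric_basis resolving_landmarks metric_dim_P5s_compl card_landmarks eqxx.
  by move=> /(_ isT); rewrite inE {forced}/j; case: v => [[i a]|j'] //=; rewrite eqxx.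
apply/implyP => /andP [resR /eqP]; rewrite metric_dim_P5s_compl => cardR.
case: v v_forced => [[i a]|//] a13.
by have /setP /(_ a) := min_resolving_copy_part resR cardR i; rewrite a13 inE.
Qed.

End ComplementOfPaths.

Theorem lemma9 (k m : nat) (T : finType) (e : rel T) :
  ~~ odd k -> 0 < k -> 1 <= m ->
  simple_graph e -> connected_graph e ->
  graph_iso (compl_graph e) (P5s_iso_rel k./2 m) ->
  #|basis_forced_set e| = k /\ metric_dim e = k + m - 1.
Proof.
move=> k_even _ m_gt0 [_ e_irr] _ iso.
have iso_compl := graph_iso_compl e_irr iso.
have k_double : k./2.*2 = k by rewrite -[RHS]odd_double_half (negbTE k_even).
rewrite (card_basis_forced_iso iso_compl) (metric_dim_iso iso_compl).
rewrite basis_forced_set_P5s_compl // card_forced_vertices metric_dim_P5s_compl //.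
by rewrite k_double addnBA.
Qed.
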